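(* Let $\mathcal{R}$ be a left-linear, left-finite TRS and suppose $s$ strongly $p$-converges to $t$ in $\mathcal{R}$. Then for each finite set $P$ of non-$\bot$ positions of $t$, there is a finite reduction $s\to^* t'$ in $\mathcal{R}$ such that $t$ and $t'$ coincide in $P$ (i.e. $t(\pi)=t'(\pi)$ for all $\pi\in P$).
   Context: Left-finite = all left-hand sides finite. Partial terms over $\Sigma_\bot=\Sigma\uplus\{\bot\}$ ordered by $\le_\bot$ (replacing subterms by $\bot$) form a complete semilattice; $\liminf_{\iota\to\alpha}a_\iota=\bigvee_{\beta<\alpha}\bigwedge_{\beta\le\iota<\alpha}a_\iota$. A reduction $(t_\iota\to_{\pi_\iota}t_{\iota+1})_{\iota<\alpha}$ with contexts $c_\iota$ ($t_\iota$ with position $\pi_\iota$ replaced by $\bot$) strongly $p$-converges to $t$ if $\liminf_{\iota\to\lambda}c_\iota=t_\lambda$ for every limit $\lambda<\alpha$ and $t$ is the last term (closed) or $t=\liminf_{\iota\to\alpha}c_\iota$ (open). *)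

From mathcomp Require Import all_boot.
Set Implicit Arguments.
Unset Strict Implicit.
Unset Printing Implicit Defensive.

Section ITRS.
Variables (F V : Type) (arity : F -> nat).

Inductive sym := Fn of F | Vr of V | Bot.

Definition sarity (a : sym) : nat :=
  match a with Fn f => arity f | _ => 0 end.

(* A (possibly infinite, possibly partial) term is given by its labelling of
   positions (sequences of naturals); None = not a position of the term. *)
Definition term := seq nat -> option sym.

Definition wf (t : term) : Prop :=
  t [::] <> None /\
  forall p i, t (rcons p i) <> None <-> exists a, t p = Some a /\ i < sarity a.

Definition total (t : term) : Prop := forall p, t p <> Some Bot.

Definition finite_term (t : term) : Prop :=
  exists ps : seq (seq nat), forall p, t p <> None -> p \in ps.

Fixpoint substp (sigma : V -> term) (t : term) (q rest : seq nat) : option sym :=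
  match t q with
  | None => None
  | Some (Vr x) => sigma x rest
  | Some a => match rest with
              | [::] => Some a
              | i :: r => substp sigma t (rcons q i) r
              end
  end.
Definition subst (sigma : V -> term) (t : term) : term :=
  fun p => substp sigma t [::] p.

Definition repl (s : term) (pi : seq nat) (u : term) : term :=
  fun p => if prefix pi p then u (drop (size pi) p) else s p.

Definition botterm : term := fun p => if p is [::] then Some Bot else None.

Definition TRS := term -> term -> Prop.

Definition vars (t : term) (x : V) : Prop := exists p, t p = Some (Vr x).

Definition is_TRS (R : TRS) : Prop :=
  forall l r, R l r ->
    wf l /\ wf r /\ total l /\ total r /\
    (exists f, l [::] = Some (Fn f)) /\
    (forall x, vars r x -> vars l x).

Definition left_linear (R : TRS) : Prop :=
  forall l r, R l r ->
    forall p q x, l p = Some (Vr x) -> l q = Some (Vr x) -> p = q.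

Definition left_finite (R : TRS) : Prop :=
  forall l r, R l r -> finite_term l.

Definition step (R : TRS) (s : term) (pi : seq nat) (u : term) : Prop :=
  exists l r (sigma : V -> term),
    [/\ R l r, (forall x, wf (sigma x)), s pi <> None,
        (forall p, s (pi ++ p) = subst sigma l p) &
        (forall p, u p = repl s pi (subst sigma r) p)].

Inductive reds (R : TRS) : term -> term -> Prop :=
  | reds_refl s : reds R s s
  | reds_step s pi u v : step R s pi u -> reds R u v -> reds R s v.

Definition le_bot (s t : term) : Prop :=
  forall p a, s p = Some a -> a <> Bot -> t p = Some a.

Definition is_glb (S : term -> Prop) (g : term) : Prop :=
  [/\ wf g, (forall u, S u -> le_bot g u) &
      (forall h, wf h -> (forall u, S u -> le_bot h u) -> le_bot h g)].

Definition is_lub (S : term -> Prop) (g : term) : Prop :=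
  [/\ wf g, (forall u, S u -> le_bot u g) &
      (forall h, wf h -> (forall u, S u -> le_bot u h) -> le_bot g h)].

(* Ordinals <= alpha are represented by a well-ordered type W with a largest
   element. *)
Definition wellorder (W : Type) (lt : W -> W -> Prop) : Prop :=
  [/\ (forall x, ~ lt x x), (forall x y z, lt x y -> lt y z -> lt x z),
      (forall x y, lt x y \/ x = y \/ lt y x) & well_founded lt].

Definition leW (W : Type) (lt : W -> W -> Prop) (x y : W) : Prop := lt x y \/ x = y.

Definition succ_of (W : Type) (lt : W -> W -> Prop) (x y : W) : Prop :=
  lt x y /\ forall z, lt x z -> leW lt y z.

Definition is_limit (W : Type) (lt : W -> W -> Prop) (lam : W) : Prop :=
  (exists x, lt x lam) /\ (forall x, lt x lam -> exists y, lt x y /\ lt y lam).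

Definition is_liminf (W : Type) (lt : W -> W -> Prop) (c : W -> term)
    (lam : W) (t : term) : Prop :=
  exists b : W -> term,
    (forall beta, lt beta lam ->
       is_glb (fun u => exists iota, [/\ leW lt beta iota, lt iota lam & u = c iota])
              (b beta)) /\
    is_lub (fun u => exists beta, lt beta lam /\ u = b beta) t.

(* s strongly p-converges to t in R: there is a reduction
   (t_iota ->_{pi_iota} t_{iota+1})_{iota < alpha} with t_0 = s, where W is the
   set of ordinals <= alpha (alpha = the top element a), T iota = t_iota,
   P iota = pi_iota, contexts c_iota = t_iota[bot]_{pi_iota}. *)
Definition spconv (R : TRS) (s t : term) : Prop :=
  exists (W : Type) (lt : W -> W -> Prop) (a : W) (T : W -> term) (P : W -> seq nat),
    let c := fun i => repl (T i) (P i) botterm in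
    wellorder lt /\ (forall x, leW lt x a) /\
    (forall z, (forall x, leW lt z x) -> forall p, T z p = s p) /\
    (forall i k, lt i a -> succ_of lt i k -> step R (T i) (P i) (T k)) /\
    (forall lam, lt lam a -> is_limit lt lam -> is_liminf lt c lam (T lam)) /\
    (~ is_limit lt a -> forall p, t p = T a p) /\
    (is_limit lt a -> is_liminf lt c a t).

End ITRS.

(* Every reduct t_i of the reduction is approximable: any finitely many non-bot
   positions of t_i are reproduced by some finite reduction from s.  At a successor, the step l -> r at pi is pulled back:
   a term agreeing with t_i on the function-symbol positions of the redex pattern
   (finitely many, by left-finiteness) matches l, and by left-linearity every
   variable of l is bound at a single occurrence, so each position of t_(i+1) below
   a substituted variable has a unique origin in t_i; agreeing there too, the same
   step reproduces t_(i+1) at the given positions.  At a limit (and for t itself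
   when the reduction is open), a non-bot symbol of a liminf occurs in all contexts
   c_j from some beta on, so finitely many positions already agree with t_beta. *)

From Pilot Require Import Defs.
From mathcomp Require Import all_boot.
From Stdlib Require Import Classical ClassicalEpsilon FunctionalExtensionality.

Set Implicit Arguments.
Unset Strict Implicit.
Unset Printing Implicit Defensive.

Lemma seq_choice (A B : eqType) (Q : B -> Prop) (P : A -> B -> Prop) (s : seq A) :
  (forall x, x \in s -> exists2 y, Q y & P x y) ->
  exists2 ys : seq B, (forall y, y \in ys -> Q y) &
    forall x, x \in s -> exists2 y, y \in ys & P x y.
Proof.
elim: s => [|x s IH] H; first by exists [::].
have [y Qy Pxy] := H x (mem_head x s).
have [|ys Hys Hs] := IH; first by move=> z Hz; apply: H; rewrite inE Hz orbT.
exists (y :: ys) => z; rewrite inE.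
  by case/orP => [/eqP ->|/Hys].
case/orP => [/eqP ->|/Hs [w Hw Pzw]]; first by exists y; rewrite ?mem_head.
by exists w; rewrite // inE Hw orbT.
Qed.

Section Terms.
Variables (F V : Type) (arity : F -> nat).
Local Notation tm := (term F V).
Local Notation wf := (wf arity).
Local Notation Vr := (Vr F).
Local Notation Fn := (Fn V).
Local Notation Bot := (Bot F V).

Definition agree (u v : tm) (Ps : seq (seq nat)) := forall p, p \in Ps -> u p = v p.

Definition nonbot (u : tm) (Ps : seq (seq nat)) :=
  forall p, p \in Ps -> exists a, u p = Some a /\ a <> Bot.

Lemma wf_prefix (t : tm) p q : wf t -> t (p ++ q) <> None -> t p <> None.
Proof.
move=> [_ Hw]; elim/last_ind: q => [|q i IH]; first by rewrite cats0.
by rewrite -rcons_cat => /Hw [a [Ha _]]; apply: IH; rewrite Ha.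
Qed.

Lemma wf_var_leaf (t : tm) p q x : wf t -> t p = Some (Vr x) ->
  t (p ++ q) <> None -> q = [::].
Proof.
move=> Hw Hx; case: q => // i q; rewrite -cat_rcons => /(wf_prefix Hw).
by case/(proj2 Hw) => a [Ha]; rewrite Hx in Ha; case: Ha => <-.
Qed.

Lemma wf_sub (t : tm) p : wf t -> t p <> None -> wf (fun q => t (p ++ q)).
Proof.
move=> [_ Hw] Hp; split; first by rewrite cats0.
by move=> q i; rewrite -rcons_cat; apply: Hw.
Qed.

Definition below_var (t : tm) p := exists p1 p2 x, p = p1 ++ p2 /\ t p1 = Some (Vr x).

Lemma below_var_rcons (t : tm) p i : below_var t (rcons p i) -> ~ below_var t p ->
  exists x, t (rcons p i) = Some (Vr x).
Proof.
case=> p1 [p2 [x [E Hx]]] Hp; exists x; case/lastP: p2 E => [|p2 j].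
  by rewrite cats0 => ->.
rewrite -rcons_cat => /eqP; rewrite eqseq_rcons => /andP [/eqP Ep _].
by case: Hp; exists p1, p2, x.
Qed.

Lemma substp_var (sigma : V -> tm) (t : tm) q p1 p2 x : wf t ->
  t (q ++ p1) = Some (Vr x) -> substp sigma t q (p1 ++ p2) = sigma x p2.
Proof.
elim: p1 q => [|i p1 IH] q Hw Hx /=.
  by rewrite cats0 in Hx; case: p2 => [|j p2] /=; rewrite Hx.
have Hq : t (q ++ i :: p1) <> None by rewrite Hx.
case E: (t q) => [[f|y|]|].
- by apply: IH; rewrite ?cat_rcons.
- by have := wf_var_leaf Hw E Hq.
- by apply: IH; rewrite ?cat_rcons.
- by case: (wf_prefix Hw Hq).
Qed.

Lemma subst_var (sigma : V -> tm) (t : tm) p1 p2 x : wf t ->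
  t p1 = Some (Vr x) -> subst sigma t (p1 ++ p2) = sigma x p2.
Proof. by move=> Hw Hx; apply: (@substp_var sigma t [::]). Qed.

Lemma substp_not_var (sigma : V -> tm) (t : tm) q p : wf t ->
  (forall p1 p2 x, p = p1 ++ p2 -> t (q ++ p1) <> Some (Vr x)) ->
  substp sigma t q p = t (q ++ p).
Proof.
elim: p q => [|i p IH] q Hw Hnv /=.
  rewrite cats0; case E: (t q) => [[f|y|]|] //.
  by have := Hnv [::] [::] y erefl; rewrite cats0 E.
have Hrest : substp sigma t (rcons q i) p = t (q ++ i :: p).
  rewrite IH // -?cat_rcons // => p1 p2 x Ep.
  by rewrite cat_rcons; apply: (Hnv (i :: p1) p2); rewrite Ep.
case E: (t q) => [[f|y|]|] //.
  by have := Hnv [::] (i :: p) y erefl; rewrite cats0 E.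
case E': (t (q ++ i :: p)) => [b|] //.
by case: (wf_prefix Hw (q := i :: p) (p := q)); rewrite ?E ?E'.
Qed.

Lemma subst_not_below_var (sigma : V -> tm) (t : tm) p : wf t -> ~ below_var t p ->
  subst sigma t p = t p.
Proof.
move=> Hw Hp; apply: substp_not_var => // p1 p2 x E Hx.
by apply: Hp; exists p1, p2, x.
Qed.

Lemma subst_fn (sigma : V -> tm) (t : tm) p f : wf t -> t p = Some (Fn f) ->
  subst sigma t p = Some (Fn f).
Proof.
move=> Hw Hf; rewrite subst_not_below_var // => -[p1 [p2 [x [E Hx]]]].
have E2 : p2 = [::] by apply: (wf_var_leaf Hw Hx); rewrite -E Hf.
by move: Hf; rewrite E E2 cats0 Hx.
Qed.

Lemma wf_subst (sigma : V -> tm) (r : tm) : wf r -> (forall x, wf (sigma x)) ->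
  wf (subst sigma r).
Proof.
move=> Hw Hs; split.
  case: (classic (exists x, r [::] = Some (Vr x))) => [[x Hx]|Hn].
    by rewrite -[[::]]cats0 (subst_var _ _ Hw Hx); case: (Hs x).
  rewrite subst_not_below_var //; first by case: Hw.
  by case=> -[|? ?] [p2 [x [_ Hx]]] //; apply: Hn; exists x.
move=> p i; case: (classic (below_var r p)) => [[p1 [p2 [x [-> Hx]]]]|Hn].
  by rewrite rcons_cat !(subst_var _ _ Hw Hx); apply: (proj2 (Hs x)).
rewrite (subst_not_below_var _ Hw Hn).
case: (classic (below_var r (rcons p i))) => [Hb|Hn'].
  have [x Hx] := below_var_rcons Hb Hn.
  rewrite -[rcons p i]cats0 (subst_var _ _ Hw Hx); split=> _.
    by apply/(proj2 Hw); rewrite Hx.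
  by case: (Hs x).
by rewrite (subst_not_below_var _ Hw Hn'); apply: (proj2 Hw).
Qed.

Lemma wf_repl (s w : tm) pi : wf s -> s pi <> None -> wf w -> wf (repl s pi w).
Proof.
move=> Hs Hpi Hw; rewrite /repl; split.
  by case: pi Hpi => [|j pi] /= Hpi; [case: Hw | case: Hs].
move=> p i; case Hp: (prefix pi p).
  rewrite (prefix_trans Hp (prefix_rcons _ _)).
  by case/prefixP: Hp => q ->; rewrite rcons_cat !drop_size_cat //; apply: (proj2 Hw).
case Hr: (prefix pi (rcons p i)); last exact: (proj2 Hs).
case/prefixP: Hr => q; case/lastP: q => [|q j]; last first.
  rewrite -rcons_cat => /eqP; rewrite eqseq_rcons => /andP [/eqP Ep _].
  by rewrite Ep prefix_prefix in Hp.
rewrite cats0 => Epi; rewrite -Epi drop_size; split=> _; last by case: Hw.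
by apply/(proj2 Hs); rewrite Epi.
Qed.

Lemma wf_step (R : TRS F V) (s u : tm) pi : is_TRS arity R -> wf s ->
  step arity R s pi u -> wf u.
Proof.
move=> HR Hws [l [r [sigma [Hlr Hsig Hpi _ Hu]]]].
have [_ [Hwr _]] := HR l r Hlr.
rewrite (functional_extensionality _ _ Hu).
by apply: wf_repl => //; apply: wf_subst.
Qed.

Lemma wf_reds (R : TRS F V) (s u : tm) : is_TRS arity R -> wf s ->
  reds arity R s u -> wf u.
Proof.
move=> HR Hws Hr; elim: Hr Hws => // {}s pi v w Hst _ IH Hws.
exact: IH (wf_step HR Hws Hst).
Qed.

Lemma reds_rcons (R : TRS F V) (s u v : tm) pi :
  reds arity R s u -> step arity R u pi v -> reds arity R s v.
Proof.
elim=> [x|x pi' y z Hst _ IH] H; last exact: reds_step Hst (IH H).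
exact: reds_step H (reds_refl _ _ _).
Qed.

Lemma repl_bot (u : tm) pi p a : repl u pi (botterm F V) p = Some a -> a <> Bot ->
  u p = Some a.
Proof.
rewrite /repl; case: ifP => // _; rewrite /botterm.
by case: drop => [|? ?] //= -[<-].
Qed.

Section Join.
Variable S : tm -> Prop.

(* For a chain, this pointwise union is a well-formed upper bound; comparing it with
   an abstract least upper bound shows that the latter has no new non-bot labels. *)
Definition join_term : tm := fun q =>
  if excluded_middle_informative (exists a, a <> Bot /\ exists2 v, S v & v q = Some a)
    is left _
  then Some (epsilon (inhabits Bot) (fun a => a <> Bot /\ exists2 v, S v & v q = Some a))
  else if excluded_middle_informative (exists2 v, S v & v q <> None) is left _ then Some Bot
  else None.

Lemma join_nonbot q a : join_term q = Some a -> a <> Bot -> exists2 v, S v & v q = Some a.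
Proof.
rewrite /join_term; case: excluded_middle_informative => [Hex|_].
  by case=> <- _; case: (epsilon_spec (inhabits Bot) _ Hex).
by case: excluded_middle_informative => // _ [<-].
Qed.

Lemma join_defined q : join_term q <> None <-> exists2 v, S v & v q <> None.
Proof.
rewrite /join_term; case: excluded_middle_informative => [Hex|Hn].
  by split=> // _; case: Hex => a [_ [v Hv Ha]]; exists v; rewrite ?Ha.
by case: excluded_middle_informative.
Qed.

Hypotheses (S_wf : forall v, S v -> wf v)
  (S_chain : forall v w, S v -> S w -> le_bot v w \/ le_bot w v).

Lemma join_label v q a : S v -> v q = Some a -> a <> Bot -> join_term q = Some a.
Proof.
move=> Sv Hva Ha; rewrite /join_term.
case: excluded_middle_informative => [Hex|Hn].
  case: (epsilon_spec (inhabits Bot) _ Hex) => Hb [w Sw Hwb]; congr Some.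
  case: (S_chain Sv Sw) => [/(_ q a Hva Ha)|/(_ q _ Hwb Hb)]; first by rewrite Hwb => -[].
  by rewrite Hva => -[].
by case: Hn; exists a; split=> //; exists v.
Qed.

Lemma wf_join : (exists v, S v) -> wf join_term.
Proof.
move=> [v0 Sv0]; split; first by apply/join_defined; exists v0; case: (S_wf Sv0).
move=> q i; split.
  case/join_defined => v Sv /(proj2 (S_wf Sv)) [a [Ha Hi]].
  by exists a; split=> //; apply: (join_label Sv Ha); case: a Ha Hi.
case=> a [Ha Hi]; have Hab : a <> Bot by case: a Ha Hi.
have [v Sv Hva] := join_nonbot Ha Hab.
by apply/join_defined; exists v => //; apply/(proj2 (S_wf Sv)); exists a.
Qed.

Lemma lub_nonbot u p a : (exists v, S v) -> is_lub arity S u -> u p = Some a -> a <> Bot ->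
  exists2 v, S v & v p = Some a.
Proof.
move=> HS [_ _ Hleast] Hu Ha; apply: (join_nonbot _ Ha).
apply: (Hleast _ (wf_join HS)) Hu Ha => v Sv q b Hb Hbb.
exact: join_label Sv Hb Hbb.
Qed.

End Join.

(* Junk value: the root when x does not occur in l, which keeps the matcher below
   well-formed at every variable. *)
Definition var_pos (l : tm) (x : V) : seq nat :=
  epsilon (inhabits [::]) (fun p => l p = Some (Vr x) \/ (~ vars l x /\ p = [::])).

Lemma var_posP (l : tm) x : vars l x -> l (var_pos l x) = Some (Vr x).
Proof.
move=> [p Hp]; have Hex : exists p, l p = Some (Vr x) \/ (~ vars l x /\ p = [::]).
  by exists p; left.
by case: (epsilon_spec (inhabits [::]) _ Hex) => // -[[]]; exists p.
Qed.

Lemma var_pos_defined (l : tm) x : l [::] <> None -> l (var_pos l x) <> None.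
Proof.
move=> Hl0; case: (classic (vars l x)) => [/var_posP -> //|Hx].
have Hex : exists p, l p = Some (Vr x) \/ (~ vars l x /\ p = [::]) by exists [::]; right.
by rewrite /var_pos; case: (epsilon_spec (inhabits [::]) _ Hex) => [->|[_ ->]].
Qed.

Definition matcher (t : tm) pi (l : tm) : V -> tm :=
  fun x q => t ((pi ++ var_pos l x) ++ q).

Section Matching.
Variables (l t : tm) (pi : seq nat).
Hypotheses (Hwl : wf l) (Hl0 : exists f, l [::] = Some (Fn f)) (Hwt : wf t)
  (Hpat : forall q f, l q = Some (Fn f) -> t (pi ++ q) = Some (Fn f)).

Lemma match_defined q : l q <> None -> t (pi ++ q) <> None.
Proof.
case/lastP: q => [|q i] Hq; first by case: Hl0 => f /Hpat ->.
have [[f|y|] [Ha Hi]] := proj1 (proj2 Hwl q i) Hq => //.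
by rewrite -rcons_cat; apply/(proj2 Hwt); exists (Fn f); rewrite (Hpat Ha).
Qed.

Lemma match_not_below_var q : Defs.total l -> ~ below_var l q -> t (pi ++ q) = l q.
Proof.
move=> Htl; elim/last_ind: q => [|q i IH] Hq.
  by case: Hl0 => f Hf; rewrite Hf (Hpat Hf).
have {}IH : t (pi ++ q) = l q.
  apply: IH => -[p1 [p2 [x [E Hx]]]]; apply: Hq.
  by exists p1, (rcons p2 i), x; rewrite E rcons_cat.
case El: (l (rcons q i)) => [[f|y|]|]; first by rewrite (Hpat El).
- by case: Hq; exists (rcons q i), [::], y; rewrite cats0.
- by have := Htl (rcons q i); rewrite El.
rewrite -rcons_cat; case Et: (t (rcons (pi ++ q) i)) => [b|] //.
have : t (rcons (pi ++ q) i) <> None by rewrite Et.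
case/(proj2 Hwt) => a [Ha Hi]; rewrite IH in Ha.
by have : l (rcons q i) <> None by apply/(proj2 Hwl); exists a.
Qed.

Lemma matchP q : Defs.total l ->
  (forall p p' x, l p = Some (Vr x) -> l p' = Some (Vr x) -> p = p') ->
  t (pi ++ q) = subst (matcher t pi l) l q.
Proof.
move=> Htl Hlin; case: (classic (below_var l q)) => [[p1 [p2 [x [-> Hx]]]]|Hn].
  rewrite (subst_var _ _ Hwl Hx) /matcher catA.
  by rewrite (Hlin _ _ _ (var_posP (ex_intro _ p1 Hx)) Hx).
by rewrite subst_not_below_var // match_not_below_var.
Qed.

Lemma wf_matcher x : wf (matcher t pi l x).
Proof.
apply: wf_sub => //; apply: match_defined; apply: var_pos_defined.
by case: Hl0 => f ->.
Qed.

End Matching.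

Lemma step_match (R : TRS F V) l r (t : tm) pi :
  is_TRS arity R -> left_linear R -> R l r -> wf t ->
  (forall q f, l q = Some (Fn f) -> t (pi ++ q) = Some (Fn f)) ->
  step arity R t pi (repl t pi (subst (matcher t pi l) r)).
Proof.
move=> HR Hll Hlr Hwt Hpat; have [Hwl [_ [Htl [_ [Hl0 _]]]]] := HR l r Hlr.
exists l, r, (matcher t pi l); split=> //.
- by move=> x; apply: wf_matcher.
- by rewrite -[pi]cats0; apply: (match_defined Hwl Hl0 Hwt Hpat); case: Hl0 => f ->.
- by move=> q; apply: matchP => //; apply: Hll Hlr.
Qed.

Definition is_fn (a : option (sym F V)) : bool :=
  if a is Some (Defs.Fn _) then true else false.

Section Pullback.
Variables (u v : tm) (pi : seq nat) (l r : tm) (sigma : V -> tm).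
Hypotheses (Hwl : wf l) (Hl0 : exists f, l [::] = Some (Fn f))
  (Hu : forall q, u (pi ++ q) = subst sigma l q).

Lemma redex_pattern : finite_term l ->
  exists2 ps, nonbot u ps &
    forall t', agree u t' ps -> forall q f, l q = Some (Fn f) -> t' (pi ++ q) = Some (Fn f).
Proof.
case=> ps Hps; exists [seq pi ++ q | q <- ps & is_fn (l q)].
  move=> p /mapP [q]; rewrite mem_filter; case El: (l q) => [[f||]|] //= _ ->.
  by exists (Fn f); rewrite Hu (subst_fn _ Hwl El).
move=> t' Hag q f Hf; rewrite -Hag ?Hu ?(subst_fn _ Hwl Hf) //.
by apply/mapP; exists q; rewrite // mem_filter Hf Hps ?Hf.
Qed.

Hypotheses (Hwr : wf r) (Hvars : forall x, vars r x -> vars l x)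
  (Hv : forall p, v p = repl u pi (subst sigma r) p).

Lemma step_origin p a : v p = Some a -> a <> Bot ->
  exists2 p', (exists b, u p' = Some b /\ b <> Bot) &
    forall t', t' p' = u p' -> v p = repl t' pi (subst (matcher t' pi l) r) p.
Proof.
move=> Hva Ha; rewrite /repl; case Hpre: (prefix pi p); last first.
  by exists p; [exists a; rewrite -Hva Hv /repl Hpre | move=> t' ->; rewrite Hv /repl Hpre].
set q := drop (size pi) p.
have Hvq : v p = subst sigma r q by rewrite Hv /repl Hpre.
case: (classic (below_var r q)) => [[p1 [p2 [y [Eq Hy]]]]|Hn].
  have Hyl : vars l y by apply: Hvars; exists p1.
  have Horig : u ((pi ++ var_pos l y) ++ p2) = sigma y p2.
    by rewrite -catA Hu (subst_var _ _ Hwl (var_posP Hyl)).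
  exists ((pi ++ var_pos l y) ++ p2).
    by exists a; rewrite Horig -Hva Hvq Eq (subst_var _ _ Hwr Hy).
  by move=> t' Ht'; rewrite Hvq Eq !(subst_var _ _ Hwr Hy) /matcher Ht' Horig.
(* p lies in the part built by r itself: any non-bot position of u can serve as
   origin, e.g. the redex root. *)
exists pi => [|t' _]; last by rewrite Hvq !(subst_not_below_var _ Hwr Hn).
by case: Hl0 => f Hf; exists (Fn f); rewrite -[pi]cats0 Hu (subst_fn _ Hwl Hf).
Qed.

End Pullback.

Lemma step_pullback (R : TRS F V) (u v : tm) pi Ps :
  is_TRS arity R -> left_linear R -> left_finite R ->
  step arity R u pi v -> nonbot v Ps ->
  exists2 Ps', nonbot u Ps' &
    forall t', wf t' -> agree u t' Ps' ->
      exists2 t'', step arity R t' pi t'' & agree v t'' Ps.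
Proof.
move=> HR Hll Hlf [l [r [sigma [Hlr _ _ Hu Hv]]]] HPs.
have [Hwl [Hwr [_ [_ [Hl0 Hvars]]]]] := HR l r Hlr.
have [ps Hps Hpat] := redex_pattern Hwl Hu (Hlf l r Hlr).
have [origins Horig HPs'] : exists2 origins : seq (seq nat),
    (forall p', p' \in origins -> exists b, u p' = Some b /\ b <> Bot) &
    forall p, p \in Ps -> exists2 p', p' \in origins &
      forall t', t' p' = u p' -> v p = repl t' pi (subst (matcher t' pi l) r) p.
  apply: (seq_choice (Q := fun p' => exists b, u p' = Some b /\ b <> Bot)).
  move=> p /HPs [a [Ha Hab]].
  exact: (step_origin Hwl Hl0 Hu Hwr Hvars Hv Ha Hab).
exists (ps ++ origins) => [p|t' Hwt' Hag].
  by rewrite mem_cat => /orP [/Hps|/Horig].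
exists (repl t' pi (subst (matcher t' pi l) r)).
  by apply: step_match => //; apply: Hpat => p Hp; apply: Hag; rewrite mem_cat Hp.
move=> p /HPs' [p' Hp' Ht']; apply: Ht'; symmetry; apply: Hag.
by rewrite mem_cat Hp' orbT.
Qed.

Lemma le_bot_glb (S S' : tm -> Prop) (g g' : tm) :
  is_glb arity S g -> is_glb arity S' g' -> (forall w, S' w -> S w) -> le_bot g g'.
Proof.
move=> [Hwg Hlow _] [_ _ Hgreat] HS; apply: Hgreat => // w /HS; exact: Hlow.
Qed.

Section WellOrder.
Variables (W : Type) (lt : W -> W -> Prop).
Hypothesis Hwo : wellorder lt.

Lemma leW_trans x y z : leW lt x y -> leW lt y z -> leW lt x z.
Proof.
case: Hwo => _ Htr _ _ [Hxy|<-] [Hyz|<-]; rewrite /leW; auto.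
by left; apply: Htr Hxy Hyz.
Qed.

Lemma leW_upper x y : exists z, [/\ z = x \/ z = y, leW lt x z & leW lt y z].
Proof.
case: Hwo => _ _ Htri _; case: (Htri x y) => [Hxy|[<-|Hyx]].
- by exists y; split; [right|left|right].
- by exists x; split; [left|right|right].
- by exists x; split; [left|right|left].
Qed.

Lemma wellorder_cases z :
  (forall x, ~ lt x z) \/ is_limit lt z \/ exists x, succ_of lt x z.
Proof.
case: (classic (exists x, lt x z)) => [Hex|Hn]; last by left=> x Hx; apply: Hn; exists x.
case: (classic (is_limit lt z)) => [|Hnl]; [by right; left | right; right].
have [x [Hx Hnx]] : exists x, lt x z /\ ~ exists y, lt x y /\ lt y z.
  apply: NNPP => Hn; apply: Hnl; split=> // x Hx.
  by apply: NNPP => Hn2; apply: Hn; exists x.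
exists x; split=> // y Hy; case: Hwo => _ _ Htri _.
case: (Htri y z) => [Hyz|[->|Hzy]]; [by case: Hnx; exists y | by right | by left].
Qed.

Lemma liminf_eventually (c : W -> tm) lam u p a :
  is_limit lt lam -> is_liminf arity lt c lam u -> u p = Some a -> a <> Bot ->
  exists2 beta, lt beta lam &
    forall iota, leW lt beta iota -> lt iota lam -> c iota p = Some a.
Proof.
move=> [[w0 Hw0] _] [b [Hglb Hlub]] Hu Ha.
have Hmono be be' : lt be lam -> lt be' lam -> lt be be' -> le_bot (b be) (b be').
  move=> Hb Hb' Hlt; apply: le_bot_glb (Hglb _ Hb) (Hglb _ Hb') _.
  by move=> _ [io [Hio Hiol ->]]; exists io; split=> //; apply: leW_trans Hio; left.
pose S v := exists be, lt be lam /\ v = b be.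
have S_wf v : S v -> wf v by case=> be [Hb ->]; case: (Hglb be Hb).
have S_chain v w : S v -> S w -> le_bot v w \/ le_bot w v.
  case=> be [Hb ->] [be' [Hb' ->]]; case: Hwo => _ _ Htri _.
  case: (Htri be be') => [Hlt|[<-|Hlt]]; last by right; apply: Hmono.
  - by left; apply: Hmono.
  - by left.
have HS : exists v, S v by exists (b w0), w0.
have [_ [be [Hb ->]] Hbp] := lub_nonbot S_wf S_chain HS Hlub Hu Ha.
exists be => // io Hio Hiol; have [_ Hlow _] := Hglb be Hb.
by apply: (Hlow (c io)) Hbp Ha; exists io.
Qed.

Lemma liminf_eventually_agree (T : W -> tm) (P : W -> seq nat) lam u Ps :
  is_limit lt lam -> is_liminf arity lt (fun i => repl (T i) (P i) (botterm F V)) lam u ->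
  nonbot u Ps ->
  exists2 beta, lt beta lam &
    forall iota, leW lt beta iota -> lt iota lam -> agree u (T iota) Ps.
Proof.
move=> Hl Hli; elim: Ps => [|p Ps IH] HPs.
  by case: Hl => -[w0 Hw0] _; exists w0.
have [b1 Hb1 H1] : exists2 beta, lt beta lam &
    forall iota, leW lt beta iota -> lt iota lam -> agree u (T iota) Ps.
  by apply: IH => q Hq; apply: HPs; rewrite inE Hq orbT.
have [a [Ha Hab]] := HPs p (mem_head p Ps).
have [b2 Hb2 H2] := liminf_eventually Hl Hli Ha Hab.
have [b [Eb Hb1b Hb2b]] := leW_upper b1 b2.
exists b; first by case: Eb => ->.
move=> io Hio Hiol q; rewrite inE => /orP [/eqP ->|Hq].
  by rewrite Ha; symmetry; apply: repl_bot Hab; apply: H2 Hiol; apply: leW_trans Hio.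
by apply: H1 Hq; [apply: leW_trans Hio|].
Qed.

End WellOrder.

Section Approximation.
Variables (R : TRS F V) (s : tm).
Hypotheses (HR : is_TRS arity R) (Hll : left_linear R) (Hlf : left_finite R) (Hws : wf s).

Definition approximable (u : tm) :=
  forall Ps, nonbot u Ps -> exists2 t', reds arity R s t' & agree u t' Ps.

Lemma approximable_step u v pi : step arity R u pi v -> approximable u -> approximable v.
Proof.
move=> Hst Hu Ps HPs; have [Ps' HPs' Hback] := step_pullback HR Hll Hlf Hst HPs.
have [t' Hr Hag] := Hu Ps' HPs'.
have [t'' Hst' Hag'] := Hback t' (wf_reds HR Hws Hr) Hag.
by exists t'' => //; apply: reds_rcons Hr Hst'.
Qed.

Variables (W : Type) (lt : W -> W -> Prop) (T : W -> tm) (P : W -> seq nat).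
Hypothesis Hwo : wellorder lt.
Local Notation c := (fun i => repl (T i) (P i) (botterm F V)).

Lemma approximable_liminf lam u :
  is_limit lt lam -> is_liminf arity lt c lam u ->
  (forall beta, lt beta lam -> approximable (T beta)) -> approximable u.
Proof.
move=> Hl Hli IH Ps HPs; have [be Hbe Hag] := liminf_eventually_agree Hwo Hl Hli HPs.
have {}Hag : agree u (T be) Ps by apply: Hag => //; right.
have [|t' Hr Ht'] := IH be Hbe Ps; first by move=> p Hp; rewrite -Hag //; apply: HPs.
by exists t' => // p Hp; rewrite Hag // Ht'.
Qed.

Variable a : W.
Hypotheses (Htop : forall x, leW lt x a)
  (Hinit : forall z, (forall x, leW lt z x) -> forall p, T z p = s p)
  (Hstep : forall i k, lt i a -> succ_of lt i k -> step arity R (T i) (P i) (T k))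
  (Hlim : forall lam, lt lam a -> is_limit lt lam -> is_liminf arity lt c lam (T lam)).

Lemma approximable_reduct z : (is_limit lt z -> lt z a) -> approximable (T z).
Proof.
case: (Hwo) => _ Htr Htri Hwf; elim/(well_founded_ind Hwf): z => z IH Hza.
have IH' x : lt x z -> approximable (T x).
  move=> Hxz; apply: IH => // _; case: (Htop z) => [|<- //]; exact: Htr.
case: (wellorder_cases Hwo z) => [Hmin|[Hl|[x [Hxz Hsucc]]]].
- move=> Ps _; exists s => [|p _]; first exact: reds_refl.
  apply: Hinit => y; case: (Htri z y) => [|[->|/Hmin]] //; [by left | by right].
- exact: approximable_liminf Hl (Hlim (Hza Hl) Hl) IH'.
- apply: approximable_step (IH' x Hxz); apply: Hstep (conj Hxz Hsucc).
  by case: (Htop z) => [|<- //]; exact: Htr.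
Qed.

End Approximation.

End Terms.

Theorem proposition6p5 (F V : Type) (arity : F -> nat) (R : TRS F V)
    (s t : term F V) :
  is_TRS arity R -> left_linear R -> left_finite R -> wf arity s ->
  spconv arity R s t ->
  forall Ps : seq (seq nat),
    (forall pi, pi \in Ps -> exists a, t pi = Some a /\ a <> Bot F V) ->
    exists t' : term F V,
      reds arity R s t' /\ (forall pi, pi \in Ps -> t pi = t' pi).
Proof.
move=> HR Hll Hlf Hws [W [lt [a [T [P /= [Hwo [Htop [Hinit [Hstep [Hlim Hend]]]]]]]]]].
have HT := approximable_reduct HR Hll Hlf Hws Hwo Htop Hinit Hstep Hlim.
suff Ht : approximable arity R s t.
  by move=> Ps /Ht [t' Hr Ht']; exists t'.
case: (classic (is_limit lt a)) => [Hl|Hnl]; case: Hend => Hclosed Hopen.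
  exact: (approximable_liminf Hwo Hl (Hopen Hl) (fun beta Hb => HT beta (fun _ => Hb))).
rewrite (functional_extensionality _ _ (Hclosed Hnl)).
by apply: HT => /Hnl.
Qed.
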